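(* Let $V$ be a finite set, let $d$ be a monotone and consistent symmetric set function on $V$, and let $\tau\in\mathbb{R}$. Let $\mathcal{V}$ be a partition of $V$ such that $\lambda_{(V,d)}(u,v)\geq\tau$ for every pair $u,v\in V$ with $[u]=[v]$. Then for every pair $s,t\in V$ with $[s]\neq[t]$, $$\min\{\tau,\lambda_{(\mathcal{V},d_\mathcal{V})}([s],[t])\}=\min\{\tau,\lambda_{(V,d)}(s,t)\},$$ and moreover $$\min\{\tau,\lambda_{(\mathcal{V},d_\mathcal{V})}\}=\min\{\tau,\lambda_{(V,d)}\}.$$
   Context: A symmetric set function $d$ on a finite set $V$ assigns a real number $d(S,T)$ to every ordered pair $(S,T)$ of disjoint subsets of $V$, such that $d(S,T)=d(T,S)$. It is monotone if $d(S,T')\leq d(S,T)$ whenever $S,T$ are disjoint and $T'\subseteq T$; consistent if for all pairwise disjoint $R,S,T$, $d(S,R)\geq d(T,R)$ implies $d(S,R\cup T)\geq d(S\cup R,T)$. For $s,t\in V$, $\lambda_{(V,d)}(s,t)=\min\{d(S,V\setminus S)\mid s\in S\subseteq V,\ t\notin S\}$ and $\lambda_{(V,d)}=\min\{\lambda_{(V,d)}(s,t)\mid s,t\in V\}$, with the minimum of an empty set being $+\infty$. For a partition $\mathcal{V}$ of $V$ and $v\in V$, $[v]$ denotes the class of $\mathcal{V}$ containing $v$; for a set $\mathcal{S}$ of classes, $\cup\mathcal{S}$ is the union of its classes. The induced function on $\mathcal{V}$ is $d_\mathcal{V}(\mathcal{S},\mathcal{T})=d(\cup\mathcal{S},\cup\mathcal{T})$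 for disjoint sets $\mathcal{S},\mathcal{T}$ of classes; it is a symmetric set function on the finite set $\mathcal{V}$, and $\lambda_{(\mathcal{V},d_\mathcal{V})}(\cdot,\cdot)$, $\lambda_{(\mathcal{V},d_\mathcal{V})}$ are defined analogously. *)

From HB Require Import structures.
From mathcomp Require Import all_boot all_order all_algebra.
From mathcomp Require Import constructive_ereal.
Set Implicit Arguments. Unset Strict Implicit. Unset Printing Implicit Defensive.
Import Order.TTheory GRing.Theory Num.Theory.
Local Open Scope ring_scope.
Local Open Scope ereal_scope.

Section SetFun.
Variables (R : realFieldType) (T : finType).

(* A set function d : assigns a real to every pair of subsets; only the values
   on disjoint pairs matter. *)
Definition symmetric_sf (d : {set T} -> {set T} -> R) : Prop :=
  forall S U : {set T}, [disjoint S & U] -> d S U = d U S.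

Definition monotone_sf (d : {set T} -> {set T} -> R) : Prop :=
  forall S U U' : {set T}, [disjoint S & U] -> U' \subset U -> (d S U' <= d S U)%R.

Definition consistent_sf (d : {set T} -> {set T} -> R) : Prop :=
  forall Rr S U : {set T},
    [disjoint Rr & S] -> [disjoint Rr & U] -> [disjoint S & U] ->
    (d U Rr <= d S Rr)%R -> (d (S :|: Rr) U <= d S (Rr :|: U))%R.

Definition lambda_st (d : {set T} -> {set T} -> R) (s t : T) : \bar R :=
  \big[mine/+oo]_(S : {set T} | (s \in S) && (t \notin S)) (d S (~: S))%:E.

Definition lambda (d : {set T} -> {set T} -> R) : \bar R :=
  \big[mine/+oo]_(s : T) \big[mine/+oo]_(t : T) lambda_st d s t.

End SetFun.

Definition classes (V : finType) (P : {set {set V}}) : finType :=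
  {C : {set V} | C \in P}.

Definition ucover (V : finType) (P : {set {set V}}) (S : {set classes P}) : {set V} :=
  \bigcup_(X in S) val X.

Definition induced (R : realFieldType) (V : finType) (P : {set {set V}})
  (d : {set V} -> {set V} -> R) : {set classes P} -> {set classes P} -> R :=
  fun S U => d (ucover S) (ucover U).
Arguments induced {R V} P d.

From HB Require Import structures.
From mathcomp Require Import all_boot all_order all_algebra.
From mathcomp Require Import constructive_ereal.
Import Order.TTheory GRing.Theory Num.Theory.
Local Open Scope ring_scope.
Local Open Scope ereal_scope.

(* A cut S of V with d(S, V \ S) < tau cannot separate two vertices of the
   same class, since these are tau-connected; hence it is the union of the
   classes it contains, and its value is that of a cut of the partition.
   Conversely, every cut of the partition is a cut of V of the same value.
   So below tau the cuts separating s from t and those separating [s] from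
   [t] have the same values, and taking minima over all pairs gives the
   global statement. *)

Lemma min_eq_of_le (disp : Order.disp_t) (T : orderType disp) (c a b : T) :
  (b <= a)%O -> (Order.min c a <= b)%O -> Order.min c a = Order.min c b.
Proof.
move=> le_ba le_min_b; apply/le_anti/andP; split.
- by rewrite le_min ge_min lexx le_min_b.
- by rewrite le_min ge_min lexx ge_min le_ba orbT.
Qed.

Section LambdaBounds.
Context {R : realFieldType} {T : finType} (d : {set T} -> {set T} -> R).

Lemma lambda_st_le_cut {s t : T} {S : {set T}} :
  s \in S -> t \notin S -> lambda_st d s t <= (d S (~: S))%:E.
Proof. by move=> sS tS; apply: bigmin_le_cond; rewrite sS tS. Qed.

Lemma le_lambda_st (x : \bar R) (s t : T) :
  (forall S : {set T}, s \in S -> t \notin S -> x <= (d S (~: S))%:E) ->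
  x <= lambda_st d s t.
Proof.
by move=> le_x; apply: le_bigmin => [|S /andP[]]; [exact: leey | exact: le_x].
Qed.

Lemma lambda_le_st (s t : T) : lambda d <= lambda_st d s t.
Proof. exact: le_trans (bigmin_le _ s _) (bigmin_le _ t _). Qed.

Lemma le_lambda (x : \bar R) :
  (forall s t : T, x <= lambda_st d s t) -> x <= lambda d.
Proof.
move=> le_x; apply: le_bigmin => [|s _]; first exact: leey.
by apply: le_bigmin => [|t _]; [exact: leey | exact: le_x].
Qed.

End LambdaBounds.

Section Partition.
Context {V : finType} {P : {set {set V}}}.
Hypothesis partP : partition P [set: V].

Lemma mem_cover_partition (x : V) : x \in cover P.
Proof. by rewrite (cover_partition partP) inE. Qed.

Definition class_of (x : V) : classes P :=
  exist _ (pblock P x) (pblock_mem (mem_cover_partition x)).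

Lemma mem_class_of (x : V) : x \in val (class_of x).
Proof. by rewrite mem_pblock mem_cover_partition. Qed.

Lemma class_ofE {X : classes P} {x : V} : x \in val X -> class_of x = X.
Proof.
by case/and3P: partP => _ tI _ xX; apply: val_inj; exact: def_pblock (valP X) xX.
Qed.

Lemma class_nonempty (X : classes P) : exists x, x \in val X.
Proof.
case/and3P: partP => _ _ P_no0.
have : val X != set0 by apply: contraNneq P_no0 => <-; exact: valP.
by case/set0Pn => x; exists x.
Qed.

Lemma mem_ucover (S : {set classes P}) {X : classes P} {x : V} :
  x \in val X -> (x \in ucover S) = (X \in S).
Proof.
move=> xX; apply/bigcupP/idP => [[Y YS xY] | XS]; last by exists X.
by rewrite -(class_ofE xX) (class_ofE xY).
Qed.

Lemma ucoverC (S : {set classes P}) : ucover (~: S) = ~: ucover S.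
Proof.
apply/setP => x; have xX := mem_class_of x.
by rewrite inE !(mem_ucover _ xX) inE.
Qed.

Section InducedCuts.
Context {R : realFieldType} (d : {set V} -> {set V} -> R).

Lemma induced_cut (S : {set classes P}) :
  induced P d S (~: S) = d (ucover S) (~: ucover S).
Proof. by rewrite /induced ucoverC. Qed.

Lemma lambda_st_le_induced {X Y : classes P} {s t : V} :
  s \in val X -> t \in val Y -> lambda_st d s t <= lambda_st (induced P d) X Y.
Proof.
move=> sX tY; apply: le_lambda_st => S XS YS; rewrite induced_cut.
by apply: lambda_st_le_cut; [rewrite (mem_ucover _ sX) | rewrite (mem_ucover _ tY)].
Qed.

Lemma lambda_le_induced : lambda d <= lambda (induced P d).
Proof.
apply: le_lambda => X Y.
have [s sX] := class_nonempty X; have [t tY] := class_nonempty Y.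
exact: le_trans (lambda_le_st d s t) (lambda_st_le_induced sX tY).
Qed.

Variable tau : R.
Hypothesis tau_le_class : forall (X : classes P) (u v : V),
  u \in val X -> v \in val X -> tau%:E <= lambda_st d u v.

Lemma light_cut_class_sub {S : {set V}} {X : classes P} {x : V} :
  (d S (~: S) < tau)%R -> x \in val X -> x \in S -> val X \subset S.
Proof.
move=> light xX xS; apply/subsetP => y yX; apply/negPn/negP => yS.
have := le_trans (tau_le_class X x y xX yX) (lambda_st_le_cut d xS yS).
by rewrite lee_fin leNgt light.
Qed.

Lemma light_cut_ucover {S : {set V}} :
  (d S (~: S) < tau)%R -> ucover [set X : classes P | val X \subset S] = S.
Proof.
move=> light; apply/setP => x; have xX := mem_class_of x.
rewrite (mem_ucover _ xX) inE; apply/subsetP/idP => [/(_ x xX) // | xS].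
exact/subsetP/(light_cut_class_sub light xX xS).
Qed.

Lemma min_lambda_st_induced_le {X Y : classes P} {s t : V} :
  s \in val X -> t \in val Y ->
  mine tau%:E (lambda_st (induced P d) X Y) <= lambda_st d s t.
Proof.
move=> sX tY; apply: le_lambda_st => S sS tS.
have [heavy | light] := leP tau (d S (~: S)); first by rewrite ge_min lee_fin heavy.
rewrite ge_min -(light_cut_ucover light) -induced_cut; apply/orP; right.
apply: lambda_st_le_cut; rewrite inE.
- exact: light_cut_class_sub light sX sS.
- by apply: contra tS => /subsetP; apply.
Qed.

Lemma min_lambda_induced_le : mine tau%:E (lambda (induced P d)) <= lambda d.
Proof.
apply: le_lambda => s t.
have le_min_st := min_lambda_st_induced_le (mem_class_of s) (mem_class_of t).
apply: le_trans le_min_st; rewrite le_min ge_min lexx ge_min.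
by rewrite lambda_le_st orbT.
Qed.

End InducedCuts.
End Partition.

Theorem lemma6 (R : realFieldType) (V : finType) (d : {set V} -> {set V} -> R)
  (tau : R) (P : {set {set V}}) :
  symmetric_sf d -> monotone_sf d -> consistent_sf d ->
  partition P [set: V] ->
  (forall (X : classes P) (u v : V), u \in val X -> v \in val X ->
     tau%:E <= lambda_st d u v) ->
  (forall (X Y : classes P) (s t : V), s \in val X -> t \in val Y -> X != Y ->
     mine tau%:E (lambda_st (induced P d) X Y) = mine tau%:E (lambda_st d s t))
  /\ mine tau%:E (lambda (induced P d)) = mine tau%:E (lambda d).
Proof.
move=> _ _ _ partP tau_le_class; split => [X Y s t sX tY _ | ].
- apply: min_eq_of_le.
  + exact: lambda_st_le_induced.
  + exact: min_lambda_st_induced_le.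
- apply: min_eq_of_le.
  + exact: lambda_le_induced.
  + exact: min_lambda_induced_le.
Qed.
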